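(* Let $H,U$ be Hilbert spaces, $1<q<\infty$, and let $m:\mathcal{F}\to L(H,U)$ be a countably additive vector measure with finite $q$-variation $\overline{m}_q^{\mathbb{P}}(\Omega)<\infty$. Let $A\in\mathcal{F}$ with $\mathbb{P}(A)>0$ be such that $m(A_1)u=m(A_2)u$ for all $u\in H$ and all $A_1,A_2\in\mathcal{F}$ with $A_1,A_2\subset A$ and $\mathbb{P}(A_1)=\mathbb{P}(A_2)$. Then $$\mathbb{P}(B\mid A)\,m(A)=m(A\cap B)\quad\text{for all }B\in\mathcal{F},$$ where $\mathbb{P}(B\mid A)=\mathbb{P}(A\cap B)/\mathbb{P}(A)$.
   Context: $(\Omega,\mathcal{F},\mathbb{P})$ is a complete atomless probability space with $\Omega$ Polish and $\mathcal{F}$ its Borel $\sigma$-field. With $\frac1p+\frac1q=1$, the $q$-variation of $m$ is $\overline{m}_q^{\mathbb{P}}(\Omega):=\sup\{\sum_{i=1}^n\|m(A_i)x_i\|_U:\ Y=\sum_{i=1}^n\mathbf{1}_{A_i}x_i,\ A_i\in\mathcal{F}\text{ pairwise disjoint},\ x_i\in H,\ \mathbb{E}\|Y\|_H^p\le1\}$. *)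

From HB Require Import structures.
From mathcomp Require Import all_boot all_order all_algebra.
From mathcomp Require Import all_classical all_reals all_analysis.
Set Implicit Arguments. Unset Strict Implicit. Unset Printing Implicit Defensive.
Import Order.TTheory GRing.Theory Num.Theory.
Import numFieldNormedType.Exports.
Local Open Scope classical_set_scope.
Local Open Scope ring_scope.

Definition is_hilbert_inner {R : realType} {H : completeNormedModType R}
  (ip : H -> H -> R) : Prop :=
  [/\ forall (a : R) (x y z : H), ip (a *: x + y) z = a * ip x z + ip y z,
      forall x y : H, ip x y = ip y x &
      forall x : H, ip x x = `|x| ^+ 2].

Definition hilbert_space {R : realType} (H : completeNormedModType R) : Prop :=
  exists ip : H -> H -> R, is_hilbert_inner ip.

Definition bounded_linear {R : realType} {H U : normedModType R}
  (T : H -> U) : Prop :=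
  (forall (a : R) (x y : H), T (a *: x + y) = a *: T x + T y) /\
  exists C : R, forall x : H, `|T x| <= C * `|x|.

Definition atomless {d} {T : measurableType d} {R : realType}
  (P : probability T R) : Prop :=
  forall A : set T, measurable A -> (0 < P A)%E ->
    exists B : set T, [/\ measurable B, B `<=` A, (0 < P B)%E & (P B < P A)%E].

Definition polish_metric {R : realType} {T : Type} (dist : T -> T -> R) : Prop :=
  [/\ (forall x y, 0 <= dist x y) /\ (forall x y, dist x y = 0 <-> x = y),
      (forall x y, dist x y = dist y x),
      (forall x y z, dist x z <= dist x y + dist y z),
      (forall u : nat -> T,
         (forall e : R, 0 < e -> exists N, forall m n, (N <= m)%N -> (N <= n)%N ->
             dist (u m) (u n) < e) ->
         exists l : T, forall e : R, 0 < e -> exists N, forall n, (N <= n)%N -> dist (u n) l < e) &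
      (exists s : nat -> T, forall x (e : R), 0 < e -> exists n, dist x (s n) < e)].

Definition metric_open {R : realType} {T : Type} (dist : T -> T -> R) (O : set T) : Prop :=
  forall x, O x -> exists e : R, 0 < e /\ forall y, dist x y < e -> O y.

Definition metric_borel {R : realType} {T : Type} (dist : T -> T -> R) : set (set T) :=
  <<s metric_open dist >>.

(* Standing assumption: the measurable sets of T are the P-completion of the Borel
   sigma-field of a Polish topology on T, and (T, F, P) is complete and atomless. *)
Definition polish_setting {d} {T : measurableType d} {R : realType}
  (P : probability T R) : Prop :=
  [/\ (exists dist : T -> T -> R, polish_metric dist /\
        (forall B, metric_borel dist B -> measurable B) /\
        (forall A : set T, measurable A <->
           exists B N, [/\ metric_borel dist B, metric_borel dist N, P N = 0%E &
                          (A `\` B) `|` (B `\` A) `<=` N])),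
      measure_is_complete P &
      atomless P].

(* countable additivity in the operator norm of L(H,U) *)
Definition op_countably_additive {d} {T : measurableType d} {R : realType}
  {H U : normedModType R} (m : set T -> H -> U) : Prop :=
  forall F : nat -> set T, (forall n, measurable (F n)) -> trivIset setT F ->
    forall e : R, 0 < e ->
      \forall n \near \oo, forall u : H,
        `|m (\bigcup_k F k) u - \sum_(k < n) m (F k) u| <= e * `|u|.

Definition simple_fun {T : Type} {R : realType} {H : normedModType R} (n : nat)
  (A : 'I_n -> set T) (x : 'I_n -> H) (w : T) : H :=
  \sum_(i < n) (\1_(A i) w : R) *: x i.

(* finite q-variation, 1/p + 1/q = 1 *)
Definition finite_q_variation {d} {T : measurableType d} {R : realType}
  {H U : normedModType R} (P : probability T R) (q : R) (m : set T -> H -> U) : Prop :=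
  let p := q / (q - 1) in
  exists M : R, forall (n : nat) (A : 'I_n -> set T) (x : 'I_n -> H),
    (forall i, measurable (A i)) ->
    (forall i j, i != j -> A i `&` A j = set0) ->
    (\int[P]_w ((`|simple_fun A x w| `^ p)%:E) <= 1)%E ->
    \sum_(i < n) `|m (A i) (x i)| <= M.

(* Fix [u]. On measurable subsets [E] of [A], the value [m E u] depends only on
   [P E], say [m E u = g (P E)]. As [P] is atomless, every value in [[0, P E]] is the
   measure of some subset of [E] (Sierpinski), so [g] is additive on [[0, P A]]:
   split a set of measure [x + y] into pieces of measures [x] and [y] and use the
   finite additivity of [m]. Finite [q]-variation bounds [m] uniformly in
   operator norm, so [g] is also bounded, and a bounded additive function on an
   interval is linear: [g t = (t / P A) g (P A)]. Take [t = P (A `&` B)]. *)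

From HB Require Import structures.
From mathcomp Require Import all_boot all_order all_algebra.
From mathcomp Require Import all_classical all_reals all_analysis.
From mathcomp Require Import ring lra.
Import Order.TTheory GRing.Theory Num.Theory.
Import numFieldNormedType.Exports.
Local Open Scope classical_set_scope.
Local Open Scope ring_scope.

Set Implicit Arguments.
Unset Strict Implicit.
Unset Printing Implicit Defensive.

Lemma bounded_natmul_le0 (R : realType) (x M : R) :
  (forall n : nat, n.+1%:R * x <= M) -> x <= 0.
Proof.
move=> x_le; rewrite leNgt; apply/negP => x0.
have M0 : 0 <= M by apply: le_trans (x_le 0%N); rewrite mul1r ltW.
have := archi_boundP (divr_ge0 M0 (ltW x0)); rewrite ltr_pdivrMr //.
by move: (x_le (Num.Def.archi_bound (M / x))); rewrite -natr1 mulrDl mul1r; lra.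
Qed.

Lemma nat_mul_rem (R : realType) (t c : R) : 0 <= t -> 0 < c ->
  exists k : nat, exists2 s, 0 <= s < c & t = k%:R * c + s.
Proof.
move=> t0 c0; have /andP[] := truncn_itv (divr_ge0 t0 (ltW c0)).
set k := Num.truncn _; rewrite ler_pdivlMr // ltr_pdivrMr // -natr1 mulrDl mul1r => kt tk.
by exists k, (t - k%:R * c); [rewrite subr_ge0 kt ltrBlDl | rewrite addrC subrK].
Qed.

Section normed_zero.
Variables (R : realType) (V : normedModType R).

Lemma norm_le_mul_eq0 (w : V) (c : R) : (forall e : R, 0 < e -> `|w| <= e * c) -> w = 0.
Proof.
move=> small_w; apply/normr0_eq0/eqP; rewrite eq_le normr_ge0 andbT.
apply/ler_addgt0Pr => e e0; rewrite add0r.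
have c1 : 0 < `|c| + 1 by rewrite ltr_wpDl.
apply: le_trans (small_w _ (divr_gt0 e0 c1)) _.
rewrite mulrAC ler_pdivrMr // ler_wpM2l ?ltW //.
by rewrite (le_lt_trans (ler_norm c)) // ltrDl.
Qed.

Lemma norm_le_divn_eq0 (w : V) (K : R) : (forall n : nat, `|w| <= K / n.+1%:R) -> w = 0.
Proof.
move=> small_w; apply/normr0_eq0/eqP; rewrite eq_le normr_ge0 andbT.
by apply: (@bounded_natmul_le0 _ _ K) => n; rewrite mulrC -ler_pdivlMr.
Qed.

End normed_zero.

Section additive_bounded.
Variables (R : realType) (V : normedModType R) (a K : R) (g : R -> V).
Hypothesis g_additive :
  forall x y, 0 <= x -> 0 <= y -> x + y <= a -> g (x + y) = g x + g y.
Hypothesis g_bounded : forall x, 0 <= x <= a -> `|g x| <= K.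

Lemma additive_natmul n x : 0 <= x -> n%:R * x <= a -> g (n%:R * x) = n%:R *: g x.
Proof.
move=> x0; elim: n => [|n IH] nxa.
  rewrite !mul0r scale0r in nxa *; apply: (@addrI _ (g 0)).
  by rewrite -g_additive ?addr0.
have nx_eq : n.+1%:R * x = n%:R * x + x by rewrite -natr1 mulrDl mul1r.
have nxa' : n%:R * x <= a by rewrite (le_trans _ nxa) // ler_wpM2r // ler_nat.
by rewrite nx_eq g_additive ?mulr_ge0 // -?nx_eq // IH // -natr1 scalerDl scale1r.
Qed.

Lemma additive_bounded_small N x : 0 <= x -> N.+1%:R * x <= a ->
  `|g x| <= K / N.+1%:R.
Proof.
move=> x0 Nxa; rewrite ler_pdivlMr // mulrC -[X in X * _]ger0_norm // -normrZ.
by rewrite -additive_natmul // g_bounded // Nxa mulr_ge0.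
Qed.

(* With [c := a / (N+1)] write [t = k c + s], [0 <= s < c]: [g] is exactly linear on
   multiples of [c], and both [g s] and [g c] are at most [K / (N+1)] in norm. *)
Lemma additive_bounded_approx N t : 0 < a -> 0 <= t <= a ->
  `|g t - (t / a) *: g a| <= 2 * K / N.+1%:R.
Proof.
move=> a0 /andP[t0 ta]; set n : R := N.+1%:R.
have n0 : 0 < n by rewrite ltr0Sn.
pose c := a / n; have c0 : 0 < c by rewrite divr_gt0.
have nc : n * c = a by rewrite mulrC divfK ?gt_eqF.
have [k [s /andP[s0 sc] t_eq]] := nat_mul_rem t0 c0.
have kc_le : k%:R * c <= a by rewrite (le_trans _ ta) // t_eq lerDl.
have kc0 : 0 <= k%:R * c := mulr_ge0 (ler0n R k) (ltW c0).
have g_t : g t = k%:R *: g c + g s.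
  rewrite t_eq g_additive -?t_eq //.
  by rewrite additive_natmul // ltW.
have g_a : g a = n *: g c by rewrite -[in LHS]nc additive_natmul ?nc // ltW.
have ta_ga : (t / a) *: g a = (k%:R + s / c) *: g c.
  rewrite g_a scalerA.
  by congr (_ *: _); rewrite t_eq /c; field; rewrite ?gt_eqF.
have gc_le : `|g c| <= K / n by apply: additive_bounded_small; rewrite ?nc // ltW.
have gs_le : `|g s| <= K / n.
  by apply: additive_bounded_small; rewrite // -nc ler_pM2l // ltW.
have sc_le1 : s / c <= 1 by rewrite ler_pdivrMr ?mul1r ?ltW.
have sgc_le : s / c * `|g c| <= K / n.
  exact: le_trans (ler_piMl (normr_ge0 _) sc_le1) gc_le.
rewrite g_t ta_ga scalerDl [_ + g s]addrC addrKA (le_trans (ler_normB _ _)) //.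
rewrite normrZ (ger0_norm (divr_ge0 s0 (ltW c0))) mulr_natl mulr2n mulrDl.
exact: lerD.
Qed.

Lemma additive_bounded_linear t : 0 < a -> 0 <= t <= a -> g t = (t / a) *: g a.
Proof.
move=> a0 ta; apply/eqP; rewrite -subr_eq0; apply/eqP.
by apply: (@norm_le_divn_eq0 _ _ _ (2 * K)) => N; apply: additive_bounded_approx.
Qed.

End additive_bounded.

Section fine_probability.
Variables (R : realType) (d : measure_display) (T : measurableType d).
Variable P : probability T R.
Local Notation mu E := (fine (P E)).

Lemma fineK_probability E : measurable E -> (mu E)%:E = P E.
Proof. by move=> mE; rewrite fineK // fin_num_measure. Qed.

Lemma fine_probability_le1 E : measurable E -> mu E <= 1.
Proof. by move=> mE; rewrite -lee_fin fineK_probability ?probability_le1. Qed.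

Lemma fine_measureU E F : measurable E -> measurable F -> E `&` F = set0 ->
  mu (E `|` F) = mu E + mu F.
Proof. by move=> mE mF EF0; rewrite measureU // fineD // fin_num_measure. Qed.

Lemma fine_measureD E F : measurable E -> measurable F -> F `<=` E ->
  mu (E `\` F) = mu E - mu F.
Proof.
move=> mE mF FE; rewrite -{2}(setDUK FE) fine_measureU //.
- by rewrite [mu F + _]addrC addrK.
- exact: measurableD.
- exact: setDIK.
Qed.

Lemma le_fine_measure E F : measurable E -> measurable F -> E `<=` F -> mu E <= mu F.
Proof.
move=> mE mF EF; rewrite -lee_fin !fineK_probability //.
by apply: le_measure; rewrite ?inE.
Qed.

Lemma fine_measure_bigcup_le (C : nat -> set T) t :
  (forall n, measurable (C n)) -> (forall n, C n `<=` C n.+1) ->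
  (forall n, mu (C n) <= t) -> mu (\bigcup_n C n) <= t.
Proof.
move=> mC Cinc Ct; have mU := bigcupT_measurable _ mC.
have cvgC := @nondecreasing_cvg_mu _ _ _ P C mC mU
  ((nondecreasing_seqP _).1 (fun n => introT (subsetPset _ _) (Cinc n))).
rewrite -lee_fin fineK_probability // -(cvg_lim _ cvgC) //.
apply: lime_le; first by apply/cvg_ex; exists (P (\bigcup_n C n)).
by apply: nearW => n /=; rewrite -fineK_probability // lee_fin.
Qed.

Lemma almost_maximal_subset X (s : R) : measurable X -> 0 <= s ->
  exists D, [/\ measurable D, D `<=` X, mu D <= s &
    forall G, measurable G -> G `<=` X -> mu G <= s -> mu G <= 2 * mu D].
Proof.
move=> mX s0.
pose S := [set mu G | G in [set G | [/\ measurable G, G `<=` X & mu G <= s]]].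
have supS : has_sup S.
  split; last by exists 1 => _ [G [mG _ _] <-]; exact: fine_probability_le1.
  exists 0, set0; rewrite ?measure0 //.
  by split; rewrite ?measure0 //; exact: sub0set.
have le_supS G : measurable G -> G `<=` X -> mu G <= s -> mu G <= sup S.
  by move=> mG GX Gs; apply: sup_upper_bound => //; exists G.
have [supS0|supS0] := ltP 0 (sup S).
  have [_ [D [mD DX Ds] <-] Dsup] := sup_adherent (divr_gt0 supS0 (ltr0Sn R 1)) supS.
  exists D; split => // G mG GX Gs; have := le_supS G mG GX Gs; lra.
exists set0; split; rewrite ?measure0 //.
by move=> G mG GX Gs; rewrite /= mulr0 (le_trans (le_supS G mG GX Gs)).
Qed.

Section atomless.
Hypothesis P_atomless : atomless P.

Lemma atomless_half E : measurable E -> 0 < mu E ->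
  exists F, [/\ measurable F, F `<=` E, 0 < mu F & mu F * 2 <= mu E].
Proof.
move=> mE E0; have := P_atomless mE; rewrite -(fineK_probability mE) lte_fin.
case/(_ E0) => G [mG GE]; rewrite -(fineK_probability mG) -(fineK_probability mE).
rewrite !lte_fin => G0 GE'.
have [GE2|GE2] := leP (mu G * 2) (mu E); first by exists G.
exists (E `\` G); split; [exact: measurableD | by move=> x [] | |];
  rewrite fine_measureD //; lra.
Qed.

Lemma atomless_small E (eps : R) : measurable E -> 0 < mu E -> 0 < eps ->
  exists F, [/\ measurable F, F `<=` E, 0 < mu F & mu F <= eps].
Proof.
move=> mE E0 eps0.
have halving n : exists F, [/\ measurable F, F `<=` E, 0 < mu F & mu F * 2 ^+ n <= mu E].
  elim: n => [|n [F [mF FE F0 Fn]]]; first by exists E; split; rewrite ?expr0 ?mulr1.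
  have [G [mG GF G0 GF2]] := atomless_half mF F0.
  exists G; split => //; first exact: subset_trans FE.
  by rewrite exprS mulrA (le_trans _ Fn) // ler_wpM2r ?exprn_ge0.
have [n neps] : exists n, eps^-1 < 2 ^+ n.
  have epsn : eps^-1 < (Num.Def.archi_bound eps^-1)%:R.
    by apply: archi_boundP; rewrite invr_ge0 ltW.
  exists (Num.Def.archi_bound eps^-1); apply: lt_le_trans epsn _.
  by rewrite -natrX ler_nat ltnW // ltn_expl.
have [F [mF FE F0 Fn]] := halving n; exists F; split => //.
have pos2n : 0 < (2 : R) ^+ n := exprn_gt0 n (ltr0Sn R 1).
rewrite -(ler_pM2r pos2n); apply/ltW/(le_lt_trans Fn).
apply: (le_lt_trans (fine_probability_le1 mE)).
by rewrite -ltr_pdivrMl // mulr1.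
Qed.

(* Sierpinski: greedily add almost maximal admissible pieces; if the union fell
   short of [t], a small piece of the rest would bound every greedy step from below. *)
Lemma atomless_subset_measure E (t : R) : measurable E -> 0 <= t -> t <= mu E ->
  exists F, [/\ measurable F, F `<=` E & mu F = t].
Proof.
move=> mE t0 tE.
pose admissible C := [/\ measurable C, C `<=` E & mu C <= t].
pose greedy C D := [/\ measurable D, D `<=` E `\` C, mu D <= t - mu C &
  forall G, measurable G -> G `<=` E `\` C -> mu G <= t - mu C -> mu G <= 2 * mu D].
have /choice[f hf] C : exists D, admissible C -> greedy C D.
  have [[mC _ Ct]|nC] := pselect (admissible C); last by exists set0.
  have Ct' : 0 <= t - mu C by rewrite subr_ge0.
  by have [D hD] := almost_maximal_subset (measurableD mE mC) Ct'; exists D.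
pose C n := iter n (fun X => X `|` f X) set0.
have admC n : admissible (C n).
  elim: n => [|n /[dup] /hf [mD DE Dt _] [mC CE Ct]].
    by split; rewrite /= ?measure0 //=.
  split; [exact: measurableU | by move=> x [/CE|/DE []] | ].
  rewrite /= fine_measureU //; first by rewrite addrC -lerBrDr.
  by rewrite setIC; apply/disjoints_subset => x /DE [].
pose U := \bigcup_n C n.
have mU : measurable U by apply: bigcupT_measurable => n; case: (admC n).
have CU n : C n `<=` U by exact: bigcup_sup.
have Ut : mu U <= t.
  by apply: fine_measure_bigcup_le => [n|n x Cx|n]; [case: (admC n)|left|case: (admC n)].
have UE : U `<=` E by apply: bigcup_sub => n _; case: (admC n).
have [tU|Ult] := leP t (mu U); first by exists U; split => //; apply/le_anti/andP.
have [G [mG GEU G0 Gt]] :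
    exists G, [/\ measurable G, G `<=` E `\` U, 0 < mu G & mu G <= t - mu U].
  apply: atomless_small; first exact: measurableD.
  - by rewrite fine_measureD // subr_gt0 (lt_le_trans Ult).
  - by rewrite subr_gt0.
have grow n : n%:R * mu G <= 2 * mu (C n).
  elim: n => [|n IH]; first by rewrite mul0r mulr_ge0 ?fine_ge0.
  have [mC CE Ct] := admC n; have [mD DE _ Dmax] := hf _ (admC n).
  have : mu G <= 2 * mu (f (C n)).
    apply: Dmax => // [x /GEU [Ex nUx]|]; first by split => // /(CU n).
    by rewrite (le_trans Gt) // lerB // le_fine_measure.
  rewrite /= fine_measureU //; last by rewrite setIC; apply/disjoints_subset => x /DE [].
  move: IH; rewrite -/(C n) -[n.+1]addn1 natrD; lra.
suff : mu G <= 0 by rewrite leNgt G0.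
apply: (@bounded_natmul_le0 _ _ 2) => n; apply: le_trans (grow n.+1) _.
by have [mC _ _] := admC n.+1; exact: ler_piMr _ (fine_probability_le1 mC).
Qed.
End atomless.
End fine_probability.

Section vector_measure.
Variables (R : realType) (d : measure_display) (T : measurableType d).
Variables (H U : normedModType R) (m : set T -> H -> U).
Hypothesis m_ca : op_countably_additive m.

Lemma vmeasure0 u : m set0 u = 0.
Proof.
apply: (@norm_le_mul_eq0 _ _ _ (2 * `|u|)) => e e0.
have [N _ near_sum] := m_ca (fun=> measurable0) (@trivIset_set0 _ _ setT) e0.
have := near_sum N (leqnn N) u; have := near_sum N.+1 (leqnSn N) u.
rewrite bigcup0 // !sumr_const !card_ord => ? ?.
have -> : m set0 u = (m set0 u - m set0 u *+ N) - (m set0 u - m set0 u *+ N.+1).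
  by rewrite opprB addrA mulrSr subrKA addrK.
apply: le_trans (ler_normB _ _) _; lra.
Qed.

Lemma vmeasureU E F u : measurable E -> measurable F -> E `&` F = set0 ->
  m (E `|` F) u = m E u + m F u.
Proof.
move=> mE mF EF0; apply/eqP; rewrite -subr_eq0; apply/eqP.
apply: (@norm_le_mul_eq0 _ _ _ `|u|) => e e0.
have mEF n : measurable (bigcup2 E F n) by case: n => [|[|n]] /=.
have EF_triv : trivIset setT (bigcup2 E F) by rewrite -trivIset_bigcup2.
have [N _ near_sum] := m_ca mEF EF_triv e0.
have := near_sum N.+2 (leqW (leqnSn N)) u.
by rewrite bigcup2E !big_ord_recl /= big1 ?addr0 // => i _; exact: vmeasure0.
Qed.

End vector_measure.

Section bounded_linear.
Variables (R : realType) (H U : normedModType R) (f : H -> U).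
Hypothesis f_bl : bounded_linear f.

Lemma bounded_linear0 : f 0 = 0.
Proof. by case: f_bl => f_lin _; have := f_lin (-1) 0 0; rewrite !scaleN1r !addNr. Qed.

Lemma bounded_linear_normZ a x : `|f (a *: x)| = `|a| * `|f x|.
Proof.
by case: f_bl => f_lin _; rewrite -[a *: x]addr0 f_lin bounded_linear0 addr0 normrZ.
Qed.

End bounded_linear.

(* One-piece partitions suffice, and no condition on [q] is needed: for [|x| = 1]
   the integrand [|1_E x| `^ p] is [1_E] if [p != 0] and the constant [1] if [p = 0]
   (as [0 `^ 0 = 1]), so its integral is at most [1]. *)
Lemma finite_q_variation_bound (R : realType) d (T : measurableType d)
    (P : probability T R) (H U : normedModType R) (q : R) (m : set T -> H -> U) :
  (forall E, measurable E -> bounded_linear (m E)) -> finite_q_variation P q m ->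
  exists M : R, forall E, measurable E -> forall u, `|m E u| <= M * `|u|.
Proof.
move=> m_lin [M var_le]; exists M => E mE u.
have [->|u0] := eqVneq u 0.
  by rewrite (bounded_linear0 (m_lin E mE)) !normr0 mulr0.
pose x := `|u|^-1 *: u.
have x_norm : `|x| = 1 by rewrite normrZ ger0_norm ?invr_ge0 // mulVf ?normr_eq0.
have mx_le : `|m E x| <= M.
  have := var_le 1%N (fun=> E) (fun=> x) (fun=> mE); rewrite big_ord1; apply.
    by move=> i j; rewrite (ord1 i) (ord1 j) eqxx.
  have [p0|p0] := eqVneq (q / (q - 1)) 0.
    rewrite p0; under eq_integral do rewrite powRr0.
    by rewrite integral_cst //= mul1e probability_setT.
  have -> : (fun w => (`|simple_fun (n := 1) (fun=> E) (fun=> x) w| `^ (q / (q - 1)))%:E) =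
      (fun w => (\1_E w)%:E).
    apply: funext => w; rewrite /simple_fun big_ord1 normrZ x_norm mulr1 indicE.
    by case: (w \in E); rewrite ?normr1 ?normr0 ?powR1 ?powR0.
  by rewrite integral_indic // setIT probability_le1.
have ux : `|u| *: x = u by rewrite scalerA mulfV ?scale1r ?normr_eq0.
by rewrite -{1}ux (bounded_linear_normZ (m_lin E mE)) normr_id mulrC ler_wpM2r.
Qed.

Lemma exists_factorization (X Y : Type) (Z : pointedType) (D : set X)
    (f : X -> Y) (h : X -> Z) :
  (forall x x', D x -> D x' -> f x = f x' -> h x = h x') ->
  exists g : Y -> Z, forall x, D x -> g (f x) = h x.
Proof.
move=> h_f; have /choice[g hg] y : exists z, forall x, D x -> f x = y -> h x = z.
  have [[x [Dx <-]]|no_x] := pselect (exists x, D x /\ f x = y).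
    by exists (h x) => x' Dx' /h_f; apply.
  by exists point => x Dx fx; case: no_x; exists x.
by exists g => x Dx; rewrite (hg (f x) x Dx).
Qed.

Section measure_factorization.
Variables (R : realType) (d : measure_display) (T : measurableType d).
Variables (P : probability T R) (H U : normedModType R) (m : set T -> H -> U).
Local Notation mu E := (fine (P E)).
Variables (A : set T) (u : H) (g : R -> U).
Hypothesis mA : measurable A.
Hypothesis g_mu : forall E, measurable E -> E `<=` A -> g (mu E) = m E u.

Lemma factorization_additive : atomless P -> op_countably_additive m ->
  forall x y, 0 <= x -> 0 <= y -> x + y <= mu A -> g (x + y) = g x + g y.
Proof.
move=> P_atomless m_ca x y x0 y0 xyA.
have [E [mE EA muE]] := atomless_subset_measure P_atomless mA (addr_ge0 x0 y0) xyA.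
have xE : x <= mu E by rewrite muE lerDl.
have [F [mF FE muF]] := atomless_subset_measure P_atomless mE x0 xE.
have mEF : measurable (E `\` F) by exact: measurableD.
have muEF : mu (E `\` F) = y by rewrite fine_measureD // muE muF [x + y]addrC addrK.
have EFA : E `\` F `<=` A by move=> w [/EA].
rewrite -muE -{1}muF -muEF !g_mu //; last exact: subset_trans EA.
by rewrite -{1}(setDUK FE) vmeasureU // setDIK.
Qed.

Lemma factorization_bounded K : atomless P ->
  (forall E, measurable E -> E `<=` A -> `|m E u| <= K) ->
  forall x, 0 <= x <= mu A -> `|g x| <= K.
Proof.
move=> P_atomless m_le x /andP[x0 xA].
have [E [mE EA <-]] := atomless_subset_measure P_atomless mA x0 xA.
by rewrite g_mu // m_le.
Qed.

End measure_factorization.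

Unset Implicit Arguments.

Theorem lemma3p1 (R : realType) (d : measure_display) (Omega : measurableType d)
  (P : probability Omega R) (H U : completeNormedModType R)
  (q : R) (m : set Omega -> H -> U) (A : set Omega) :
  polish_setting P ->
  hilbert_space H -> hilbert_space U ->
  1 < q ->
  (forall E, measurable E -> bounded_linear (m E)) ->
  op_countably_additive m ->
  finite_q_variation P q m ->
  measurable A -> (0 < P A)%E ->
  (forall A1 A2 : set Omega, measurable A1 -> measurable A2 ->
     A1 `<=` A -> A2 `<=` A -> P A1 = P A2 ->
     forall u : H, m A1 u = m A2 u) ->
  forall B : set Omega, measurable B ->
    forall u : H, (fine (P (A `&` B)) / fine (P A)) *: m A u = m (A `&` B) u.
Proof.
move=> [_ _ P_atomless] _ _ _ m_lin m_ca m_var mA PA_gt0 m_inv B mB u.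
have [M m_le] := finite_q_variation_bound m_lin m_var.
have [g g_mu] : exists g : R -> U,
    forall E, measurable E -> E `<=` A -> g (fine (P E)) = m E u.
  have [|g g_mu] := @exists_factorization _ _ _ [set E | measurable E /\ E `<=` A]
      (fun E => fine (P E)) (m^~ u).
    move=> E E' [mE EA] [mE' E'A] PEE'.
    by apply: m_inv => //; rewrite -fineK_probability // PEE' fineK_probability.
  by exists g => E mE EA; apply: g_mu.
have mAB : measurable (A `&` B) by exact: measurableI.
have ABA : A `&` B `<=` A by exact: subIsetl.
rewrite -(g_mu A) // -(g_mu (A `&` B)) //; symmetry; apply: additive_bounded_linear.
- apply: (factorization_additive mA g_mu P_atomless m_ca).
- by apply: (factorization_bounded mA g_mu P_atomless) => E mE _; exact: m_le.
- by rewrite -lte_fin fineK_probability.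
- by rewrite fine_ge0 // le_fine_measure.
Qed.
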